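(* Any finite group that has a nontrivial quotient of odd order is not mixable.
   Context: For a finite group $G$, a random subproduct is a random element $g_1^{\epsilon_1}\cdots g_k^{\epsilon_k}$ where $g_1,\dots,g_k\in G$ are fixed and $\epsilon_1,\dots,\epsilon_k$ are independent Bernoulli random variables with $\epsilon_i\sim\mathrm{Ber}(p_i)$, $p_i\in[0,1]$. $G$ is called mixable if some random subproduct is distributed exactly uniformly on $G$. *)

From HB Require Import structures.
From mathcomp Require Import all_boot all_order all_algebra all_fingroup.
From mathcomp Require Import reals.
Set Implicit Arguments. Unset Strict Implicit. Unset Printing Implicit Defensive.
Import GRing.Theory Num.Theory.

Local Open Scope ring_scope.

Definition subprod (gT : finGroupType) (k : nat) (g : 'I_k -> gT)
  (e : {ffun 'I_k -> bool}) : gT :=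
  (\prod_(i < k) (if e i then g i else 1))%g.

(* Probability that the random subproduct, with independent
   e_i ~ Ber(p_i), equals x. *)
Definition subprod_prob (R : realType) (gT : finGroupType) (k : nat)
  (g : 'I_k -> gT) (p : 'I_k -> R) (x : gT) : R :=
  \sum_(e : {ffun 'I_k -> bool} | subprod g e == x)
     \prod_(i < k) (if e i then p i else 1 - p i).

Definition mixable (R : realType) (gT : finGroupType) (G : {group gT}) : Prop :=
  exists (k : nat) (g : 'I_k -> gT) (p : 'I_k -> R),
    [/\ forall i, g i \in G,
        forall i, 0 <= p i <= 1
      & forall x, x \in G -> subprod_prob g p x = #|G|%:R^-1].

From HB Require Import structures.
From mathcomp Require Import all_boot all_order all_algebra all_fingroup.
From mathcomp Require Import reals cyclic.
Set Implicit Arguments. Unset Strict Implicit. Unset Printing Implicit Defensive.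
Import GRing.Theory Num.Theory.

(* Mixability passes to homomorphic images: the image under f of a uniform random
   subproduct is the random subproduct of the images, and every fibre of f on G is
   a coset of its kernel.  So it suffices that a group Q of odd order > 1 is not
   mixable.  Splitting off the first factor g^e, e ~ Ber(p), writes the law P of a
   random subproduct as P X = (1 - p) P' X + p P' (g^-1 X).  If P is constant c on
   Q, then b := P' - c satisfies b (g^-1 X) = r b X with r = -(1 - p)/p <= 0 (or
   b = 0 outright if p = 0); iterating |Q| times gives b = r^|Q| b where r^|Q| <= 0
   because |Q| is odd, so b = 0 and P' is constant c as well.  Going down to the
   empty product, a point mass would be constant on Q, which is absurd. *)

Local Open Scope ring_scope.

Definition ffun_cons (T : Type) k (e : {ffun 'I_k -> T}) (b : T) : {ffun 'I_k.+1 -> T} :=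
  [ffun i => if unlift ord0 i is Some j then e j else b].

Lemma ffun_cons0 (T : Type) k (e : {ffun 'I_k -> T}) b : ffun_cons e b ord0 = b.
Proof. by rewrite ffunE unlift_none. Qed.

Lemma ffun_cons_lift (T : Type) k (e : {ffun 'I_k -> T}) b j :
  ffun_cons e b (lift ord0 j) = e j.
Proof. by rewrite ffunE liftK. Qed.

Lemma ffun_cons_bij (T : finType) k :
  bijective (fun eb : {ffun 'I_k -> T} * T => ffun_cons eb.1 eb.2).
Proof.
exists (fun e : {ffun 'I_k.+1 -> T} => ([ffun j => e (lift ord0 j)], e ord0)) => [[e b] | e] /=.
  by rewrite ffun_cons0; congr pair; apply/ffunP => j; rewrite ffunE ffun_cons_lift.
by apply/ffunP => i; rewrite ffunE; case: unliftP => [j|] ->; rewrite ?ffunE.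
Qed.

Lemma big_ffun_cons (R : Type) (idx : R) (op : Monoid.law idx) (T : Type) k
    (F : 'I_k.+1 -> T -> R) (e : {ffun 'I_k -> T}) b :
  \big[op/idx]_(i < k.+1) F i (ffun_cons e b i)
    = op (F ord0 b) (\big[op/idx]_(i < k) F (lift ord0 i) (e i)).
Proof.
rewrite big_ord_recl ffun_cons0; congr (op _ _).
by apply: eq_bigr => i _; rewrite ffun_cons_lift.
Qed.

Lemma subprod_prob_recl (R : realType) (gT : finGroupType) k
    (g : 'I_k.+1 -> gT) (p : 'I_k.+1 -> R) (x : gT) :
  subprod_prob g p x =
    (1 - p ord0) * subprod_prob (g \o lift ord0) (p \o lift ord0) x
    + p ord0 * subprod_prob (g \o lift ord0) (p \o lift ord0) ((g ord0)^-1 * x)%g.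
Proof.
rewrite /subprod_prob big_mkcond (reindex _ (onW_bij _ (@ffun_cons_bij bool k))).
rewrite -(pair_bigA _ (fun e b => if subprod g (ffun_cons e b) == x then
  \prod_(i < k.+1) (if ffun_cons e b i then p i else 1 - p i) else 0)) !mulr_sumr.
rewrite [X in _ = X + _]big_mkcond [X in _ = _ + X]big_mkcond -big_split.
apply: eq_bigr => e _; rewrite big_bool [LHS]addrC /subprod.
rewrite !(big_ffun_cons _ (fun i b => if b then g i else 1%g)).
rewrite !(big_ffun_cons _ (fun i b => if b then p i else 1 - p i)) /=.
rewrite mul1g (canF_eq (mulKg _)).
by congr (_ + _); case: (_ == _); rewrite ?mulr0.
Qed.

Section LeftShift.
Variables (qT : finGroupType) (Q : {group qT}) (q : qT).
Hypothesis Qq : q \in Q.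

Lemma shift_iter_card (R : pzRingType) (b : qT -> R) (r : R) :
  {in Q, forall X, b (q^-1 * X)%g = r * b X} ->
  {in Q, forall X, b X = r ^+ #|Q| * b X}.
Proof.
move=> shift_b X QX.
have iter n : b (q ^- n * X)%g = r ^+ n * b X.
  elim: n => [|n IHn]; first by rewrite expg0 invg1 mul1g expr0 mul1r.
  rewrite expgSr invMg -mulgA shift_b ?IHn ?mulrA -?exprS //.
  by rewrite groupM ?groupV ?groupX.
by rewrite -iter expg_cardG // invg1 mul1g.
Qed.

Lemma odd_lazy_step_eq0 (R : realFieldType) (b : qT -> R) (p : R) :
  odd #|Q| -> 0 <= p <= 1 ->
  {in Q, forall X, (1 - p) * b X + p * b (q^-1 * X)%g = 0} ->
  {in Q, forall X, b X = 0}.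
Proof.
move=> oddQ /andP[p_ge0 p_le1] step_b.
have [p0 | p_neq0] := eqVneq p 0.
  by move=> X /step_b; rewrite p0 subr0 mul1r mul0r addr0.
pose r := - ((1 - p) / p).
have r_le0 : r <= 0 by rewrite oppr_le0 divr_ge0 // subr_ge0.
have shift_b : {in Q, forall X, b (q^-1 * X)%g = r * b X}.
  move=> X /step_b /eqP; rewrite addr_eq0 => /eqP step_X.
  apply: (mulfI p_neq0).
  by rewrite /r mulrA mulrN mulrCA mulfV // mulr1 mulNr step_X opprK.
have rQ_le0 : r ^+ #|Q| <= 0 by rewrite real_exprn_odd_le0 ?realE ?r_le0 ?orbT.
move=> X QX; apply/eqP; have := shift_iter_card shift_b QX.
move/eqP; rewrite -subr_eq0 -{1}[b X]mul1r -mulrBl mulf_eq0 => /orP[|//].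
by rewrite subr_eq0 => /eqP r1; move: rQ_le0; rewrite -r1 ler10.
Qed.

End LeftShift.

Lemma subprod_prob_ord0 (R : realType) (gT : finGroupType) (g : 'I_0 -> gT)
    (p : 'I_0 -> R) (x : gT) :
  subprod_prob g p x = (x == 1%g)%:R.
Proof.
rewrite /subprod_prob (eq_bigl (fun=> 1%g == x)) => [|e]; last by rewrite /subprod big_ord0.
under eq_bigr do rewrite big_ord0.
rewrite eq_sym; case: eqP => _; last by rewrite big_pred0.
by rewrite sumr_const card_ffun card_ord.
Qed.

Lemma subprod_prob_nonconst (R : realType) (qT : finGroupType) (Q : {group qT})
    k (g : 'I_k -> qT) (p : 'I_k -> R) (c : R) :
  (1 < #|Q|)%N -> odd #|Q| -> (forall i, g i \in Q) -> (forall i, 0 <= p i <= 1) ->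
  ~ {in Q, forall X, subprod_prob g p X = c}.
Proof.
move=> Q_gt1 oddQ; elim: k g p => [|k IHk] g p Qg p01 const_c.
  have /trivgPn[X QX X_neq1] : Q :!=: 1%g by rewrite trivg_card1 neq_ltn Q_gt1 orbT.
  move: (const_c X QX) (const_c 1%g (group1 Q)).
  by rewrite !subprod_prob_ord0 eqxx (negPf X_neq1) => <- /eqP; rewrite oner_eq0.
have step : {in Q, forall X,
    subprod_prob (g \o lift ord0) (p \o lift ord0) X - c = 0}.
  apply: (odd_lazy_step_eq0 (Qg ord0) oddQ (p01 ord0)) => X QX.
  by rewrite !mulrBr addrACA -subprod_prob_recl const_c // -opprD -mulrDl subrK mul1r subrr.
apply: (IHk (g \o lift ord0) (p \o lift ord0) (fun i => Qg _) (fun i => p01 _)).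
by move=> X /step /eqP; rewrite subr_eq0 => /eqP.
Qed.

Lemma odd_order_not_mixable (R : realType) (qT : finGroupType) (Q : {group qT}) :
  (1 < #|Q|)%N -> odd #|Q| -> ~ mixable R Q.
Proof.
move=> Q_gt1 oddQ [k [g [p [Qg p01 unif]]]].
exact: (subprod_prob_nonconst Q_gt1 oddQ Qg p01 unif).
Qed.

Section MorphicImage.
Variables (gT rT : finGroupType) (G : {group gT}) (f : {morphism G >-> rT}).
Variables (k : nat) (g : 'I_k -> gT).
Hypothesis Gg : forall i, g i \in G.

Lemma subprod_mem e : subprod g e \in G.
Proof. by apply: group_prod => i _; case: (e i). Qed.

Lemma morph_subprod e : f (subprod g e) = subprod (f \o g) e.
Proof.
rewrite /subprod morph_prod => [|i _]; last by case: (e i).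
by apply: eq_bigr => i _ /=; case: (e i); rewrite ?morph1.
Qed.

Lemma subprod_prob_notin (R : realType) (p : 'I_k -> R) y :
  y \notin G -> subprod_prob g p y = 0.
Proof.
move=> notGy; apply: big_pred0 => e.
by apply: contraNF notGy => /eqP <-; apply: subprod_mem.
Qed.

Lemma subprod_prob_morph (R : realType) (p : 'I_k -> R) (X : rT) :
  subprod_prob (f \o g) p X = \sum_(y | f y == X) subprod_prob g p y.
Proof.
rewrite /subprod_prob (partition_big (subprod g) (fun y => f y == X)) => [|e].
  apply: eq_bigr => y /eqP fyX; apply: eq_bigl => e.
  by rewrite -morph_subprod; case: (subprod g e =P y) => [->|]; rewrite ?fyX ?eqxx ?andbF.
by rewrite morph_subprod.
Qed.

End MorphicImage.

Lemma mixable_morphim (R : realType) (gT rT : finGroupType) (G : {group gT})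
    (f : {morphism G >-> rT}) :
  mixable R G -> mixable R (f @* G).
Proof.
move=> [k [g [p [Gg p01 unif]]]]; exists k, (f \o g), p.
split=> // [i | X fGX]; first exact: mem_morphim.
have card_G : #|G| = (#|('ker f)%g| * #|(f @* G)%g|)%N.
  by rewrite card_morphim setIid Lagrange // normal_sub ?ker_normal.
rewrite subprod_prob_morph // big_mkcond.
rewrite (eq_bigr (fun y => if y \in (f @*^-1 [set X])%g then #|G|%:R^-1 else 0)); last first.
  move=> y _; rewrite !inE; have [/unif -> // | notGy] := boolP (y \in G).
  by rewrite (subprod_prob_notin Gg) // if_same.
case/morphimP: fGX => x _ Gx ->.
rewrite -big_mkcond sumr_const morphpre_set1 // card_rcoset card_G natrM invfM.
by rewrite -[_ / _ *+ _]mulr_natr mulrAC mulVf ?mul1r // pnatr_eq0 -lt0n cardG_gt0.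
Qed.

Theorem mainTheorem2 (R : realType) (gT : finGroupType) (G : {group gT}) :
  (exists H : {group gT}, [/\ (H <| G)%g, (1 < #|(G / H)%g|)%N & odd #|(G / H)%g|]) ->
  ~ mixable R G.
Proof.
move=> [H [nsHG Q_gt1 oddQ]]; pose f := restrm (normal_norm nsHG) (coset H).
have fG : (f @* G)%g = (G / H)%g by rewrite morphim_restrm setIid.
by move/(mixable_morphim f); apply: odd_order_not_mixable; rewrite /= fG.
Qed.
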